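(* Let $G$ be the weighted unit-disk graph of a finite set $S\subset\mathbb{R}^2$, let $s,a\in S$ with $a$ reachable from $s$, let $\pi_G(s,a)$ be a shortest path from $s$ to $a$ in $G$, let $l_a$ be its number of edges, and let $\varepsilon>0$. Define $\tau_a=d_G(s,a)+(l_a-1)\cdot(\varepsilon/2)$. Then $\tau_a\le(1+\varepsilon)\,d_G(s,a)$.
   Context: The weighted unit-disk graph of $S$ has vertex set $S$, an edge between $a,b$ iff $\lVert a-b\rVert\le 1$ (Euclidean norm), with weight $\lVert a-b\rVert$; $d_G(s,a)$ is the shortest-path distance. *)

From Stdlib Require Import Reals Lra List.
Open Scope R_scope.

Definition pt : Type := (R * R)%type.

Definition edist (p q : pt) : R :=
  sqrt ((fst p - fst q) ^ 2 + (snd p - snd q) ^ 2).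

(* The finite set S is given as a list of points.
   [is_walk S x l]: starting at x, the successive vertices l form a walk in the
   unit-disk graph of S: every vertex lies in S and consecutive vertices are
   distinct (no self-loops) and at Euclidean distance <= 1. *)
Fixpoint is_walk (S : list pt) (x : pt) (l : list pt) : Prop :=
  match l with
  | nil => True
  | y :: l' => In y S /\ x <> y /\ edist x y <= 1 /\ is_walk S y l'
  end.

Fixpoint wlen (x : pt) (l : list pt) : R :=
  match l with
  | nil => 0
  | y :: l' => edist x y + wlen y l'
  end.

(* the walk s :: l is a path in G from s to a; it has [length l] edges *)
Definition is_path (S : list pt) (s a : pt) (l : list pt) : Prop :=
  In s S /\ is_walk S s l /\ last l s = a.

Definition reachable (S : list pt) (s a : pt) : Prop :=
  exists l, is_path S s a l.

Definition is_dG (S : list pt) (s a : pt) (d : R) : Prop :=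
  (exists l, is_path S s a l /\ wlen s l = d) /\
  (forall l, is_path S s a l -> d <= wlen s l).

Definition shortest_path (S : list pt) (s a : pt) (l : list pt) : Prop :=
  is_path S s a l /\ (forall l', is_path S s a l' -> wlen s l <= wlen s l').

Definition min_hop_shortest_path (S : list pt) (s a : pt) (l : list pt) : Prop :=
  shortest_path S s a l /\
  (forall l', shortest_path S s a l' -> (length l <= length l')%nat).

(* On a shortest path with the fewest edges, any two vertices two hops apart
   are more than 1 apart: otherwise the edge between them (or, if they
   coincide, nothing) would replace the two hops by a walk that is no longer
   and has fewer edges.  Hence every two consecutive edges have total length
   greater than 1, which forces l_a - 1 <= 2 d_G(s,a). *)
From Stdlib Require Import Reals List.
From Stdlib Require Import Lra Lia Classical Rgeom.
Open Scope R_scope.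

Lemma last_cons_default {A : Type} (y : A) (q : list A) (d : A) :
  last (y :: q) d = last q y.
Proof.
  induction q as [|u q IH] in y, d |- *; [reflexivity|].
  change (last (u :: q) d = last (u :: q) y); rewrite !IH; reflexivity.
Qed.

Lemma last_app_default {A : Type} (p q : list A) (d : A) :
  last (p ++ q) d = last q (last p d).
Proof.
  revert d; induction p as [|y p IH]; intro d; [reflexivity|].
  rewrite <- app_comm_cons, !last_cons_default; apply IH.
Qed.

Lemma edist_dist_euc (p q : pt) :
  edist p q = dist_euc (fst p) (snd p) (fst q) (snd q).
Proof. unfold edist, dist_euc, Rsqr; f_equal; ring. Qed.

Lemma edist_ge0 (p q : pt) : 0 <= edist p q.
Proof. apply sqrt_pos. Qed.

Lemma edist_xx (p : pt) : edist p p = 0.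
Proof. rewrite edist_dist_euc; apply distance_refl. Qed.

Lemma edist_triangle (x y z : pt) : edist x z <= edist x y + edist y z.
Proof. rewrite !edist_dist_euc; apply triangle. Qed.

Lemma wlen_ge0 (x : pt) (l : list pt) : 0 <= wlen x l.
Proof.
  revert x; induction l as [|y l IH]; intro x; simpl; [lra|].
  pose proof (edist_ge0 x y); pose proof (IH y); lra.
Qed.

Lemma is_walk_app (S : list pt) (x : pt) (p q : list pt) :
  is_walk S x (p ++ q) <-> is_walk S x p /\ is_walk S (last p x) q.
Proof.
  revert x; induction p as [|y p IH]; intro x; [simpl; tauto|].
  cbn [app is_walk]; rewrite IH, last_cons_default; tauto.
Qed.

Lemma wlen_app (x : pt) (p q : list pt) :
  wlen x (p ++ q) = wlen x p + wlen (last p x) q.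
Proof.
  revert x; induction p as [|y p IH]; intro x; [simpl; ring|].
  cbn [app wlen]; rewrite IH, last_cons_default; ring.
Qed.

Lemma is_dG_shortest_path (S : list pt) (s a : pt) (d : R) (l : list pt) :
  is_dG S s a d -> shortest_path S s a l -> d = wlen s l.
Proof.
  intros [[l0 [Hl0 <-]] Hd] [Hl Hmin].
  specialize (Hd l Hl); specialize (Hmin l0 Hl0); lra.
Qed.

Lemma is_walk_shortcut (S : list pt) (x y z : pt) (q : list pt) :
  is_walk S x (y :: z :: q) -> edist x z <= 1 ->
  exists q', is_walk S x q' /\ last q' x = last q z /\
    wlen x q' <= wlen x (y :: z :: q) /\
    (length q' < length (y :: z :: q))%nat.
Proof.
  intros (_ & _ & _ & Hz & _ & _ & Hq) Hxz; simpl.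
  pose proof (edist_triangle x y z); pose proof (edist_ge0 x y);
  pose proof (edist_ge0 y z).
  destruct (classic (x = z)) as [<-|Hne].
  - exists q; repeat split; auto; lra.
  - exists (z :: q); rewrite last_cons_default; simpl; repeat split; auto; lra.
Qed.

Lemma min_hop_shortest_path_splice (S : list pt) (s a : pt) (p m m' : list pt) :
  min_hop_shortest_path S s a (p ++ m) ->
  is_walk S (last p s) m' -> last m' (last p s) = last m (last p s) ->
  wlen (last p s) m' <= wlen (last p s) m ->
  (length m <= length m')%nat.
Proof.
  intros [[[Hs [Hw Hend]] Hmin] Hfew] Hw' Hend' Hwlen.
  apply is_walk_app in Hw as [Hwp _].
  assert (Hsp : shortest_path S s a (p ++ m')).
  { split; [split; [exact Hs | split]|].
    - apply is_walk_app; auto.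
    - rewrite last_app_default, Hend', <- last_app_default; exact Hend.
    - intros l' Hl'; specialize (Hmin l' Hl'); rewrite wlen_app in *; lra. }
  specialize (Hfew _ Hsp); rewrite !length_app in Hfew; lia.
Qed.

Definition two_hops_far (x : pt) (l : list pt) : Prop :=
  forall p y z q, l = p ++ y :: z :: q -> 1 < edist (last p x) z.

Lemma two_hops_far_cons (x y : pt) (l : list pt) :
  two_hops_far x (y :: l) -> two_hops_far y l.
Proof.
  intros Hfar p u v q ->.
  specialize (Hfar (y :: p) u v q eq_refl); rewrite last_cons_default in Hfar.
  exact Hfar.
Qed.

Lemma min_hop_shortest_path_two_hops_far (S : list pt) (s a : pt) (l : list pt) :
  min_hop_shortest_path S s a l -> two_hops_far s l.
Proof.
  intros Hmh p y z q ->.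
  destruct (Rle_lt_dec (edist (last p s) z) 1) as [Hclose|]; [exfalso|assumption].
  pose proof Hmh as [[[_ [Hw _]] _] _].
  apply is_walk_app in Hw as [_ Hw].
  destruct (is_walk_shortcut _ _ _ _ _ Hw Hclose) as (q' & Hw' & Hend' & Hwlen & Hlen).
  assert (Hsame : last q' (last p s) = last (y :: z :: q) (last p s))
    by (rewrite Hend', !last_cons_default; reflexivity).
  pose proof (min_hop_shortest_path_splice _ _ _ _ _ _ Hmh Hw' Hsame Hwlen).
  lia.
Qed.

(* The first edge [edist x (hd x l)] is carried along so that the induction
   can pair each edge with its successor. *)
Lemma two_hops_far_length (x : pt) (l : list pt) :
  two_hops_far x l -> INR (length l) - 1 + edist x (hd x l) <= 2 * wlen x l.
Proof.
  revert x; induction l as [|y [|z q] IH]; intros x Hfar.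
  - simpl; rewrite edist_xx; lra.
  - pose proof (edist_ge0 x y); simpl; lra.
  - specialize (IH y (two_hops_far_cons _ _ _ Hfar)).
    specialize (Hfar nil y z q eq_refl); simpl in Hfar.
    pose proof (edist_triangle x y z).
    change (length (y :: z :: q)) with (S (length (z :: q))).
    rewrite S_INR; simpl in *; lra.
Qed.

Theorem fact4 (S : list pt) (s a : pt) (l : list pt) (d eps : R) :
  In s S -> In a S -> reachable S s a ->
  is_dG S s a d ->
  min_hop_shortest_path S s a l ->
  0 < eps ->
  d + (INR (length l) - 1) * (eps / 2) <= (1 + eps) * d.
Proof.
  intros _ _ _ HdG Hmh Heps.
  assert (Hd : d = wlen s l) by exact (is_dG_shortest_path _ _ _ _ _ HdG (proj1 Hmh)).
  pose proof (two_hops_far_length _ _ (min_hop_shortest_path_two_hops_far _ _ _ _ Hmh)).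
  pose proof (edist_ge0 s (hd s l)).
  subst d; nra.
Qed.
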